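(* Let $N\geq1$, $q=2^N$, let $\pi$ be a permutation of $q$ symbols and let $(I,F_\pi)$ be the rotated odometer $F_\pi=\mathfrak{a}\circ R_\pi$ on $I=[0,1)$. Let $I_{per}$ be the set of periodic points of $F_\pi$ and $I_{np}=I\setminus I_{per}$. Then: (i) every point of $I_{per}$ is periodic, and the restriction $F_\pi:I_{per}\to I_{per}$ is well-defined and invertible; (ii) if $I_{per}$ is non-empty, then $I_{per}$ is a finite union of half-open maximal periodic intervals $[x,y)$, $x,y\in I$; thus the set of periods of points of $(I,F_\pi)$ is finite; (iii) $0\in I_{np}$, and $F_\pi:I_{np}\to I_{np}$ is well-defined and invertible at every point of $I_{np}\setminus\{0\}$; (iv) the system $(I_{np},F_\pi)$ is minimal.
   Context: The von Neumann–Kakutani map $\mathfrak{a}:[0,1)\to[0,1)$ is $\mathfrak{a}(x)=x-(1-3\cdot 2^{-n})$ if $x\in[1-2^{1-n},1-2^{-n})$, $n\geq1$. For $q\in\mathbb{N}$ divide $I=[0,1)$ into the $q$ intervals $[k/q,(k+1)/q)$, $0\le k<q$; for a permutation $\pi$ of $q$ symbols, $R_\pi:I\to I$ is the interval exchange translating $[k/q,(k+1)/q)$ onto $[\pi(k)/q,(\pi(k)+1)/q)$. The rotated odometer is $F_\pi=\mathfrak{a}\circ R_\pi$. *)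

From Stdlib Require Import Reals Lra Lia ZArith Arith List ClassicalEpsilon.
Open Scope R_scope.

Definition in_I (x : R) : Prop := 0 <= x < 1.

Definition is_perm (q : nat) (pi : nat -> nat) : Prop :=
  (forall k, (k < q)%nat -> (pi k < q)%nat) /\
  (forall j k, (j < q)%nat -> (k < q)%nat -> pi j = pi k -> j = k).

Definition vnk_level (x : R) : nat :=
  epsilon (inhabits 1%nat)
    (fun n => (1 <= n)%nat /\ 1 - 2 / 2 ^ n <= x < 1 - 1 / 2 ^ n).

Definition vnk (x : R) : R := x - (1 - 3 / 2 ^ vnk_level x).

(* Interval exchange R_pi: translates [k/q,(k+1)/q) onto [pi k/q,(pi k+1)/q). *)
Definition rot (q : nat) (pi : nat -> nat) (x : R) : R :=
  let k := Z.to_nat (Int_part (INR q * x)) in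
  x + (INR (pi k) - INR k) / INR q.

Definition Fpi (N : nat) (pi : nat -> nat) (x : R) : R :=
  vnk (rot (2 ^ N) pi x).

Definition iterF (F : R -> R) (n : nat) (x : R) : R := Nat.iter n F x.

Definition periodic (F : R -> R) (x : R) : Prop :=
  in_I x /\ exists p : nat, (1 <= p)%nat /\ iterF F p x = x.

Definition I_per (F : R -> R) (x : R) : Prop := periodic F x.
Definition I_np (F : R -> R) (x : R) : Prop := in_I x /\ ~ periodic F x.

Definition least_period (F : R -> R) (x : R) (p : nat) : Prop :=
  (1 <= p)%nat /\ iterF F p x = x /\
  (forall m : nat, (1 <= m)%nat -> (m < p)%nat -> iterF F m x <> x).

Definition per_interval (F : R -> R) (p : nat) (x y : R) : Prop :=
  x < y /\ forall z, x <= z < y -> in_I z /\ least_period F z p.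

Definition max_per_interval (F : R -> R) (x y : R) : Prop :=
  exists p, per_interval F p x y /\
    forall x' y', per_interval F p x' y' -> x' <= x -> y <= y' -> x' = x /\ y' = y.

From Stdlib Require Import Reals Lra Lia ZArith Arith List ClassicalEpsilon Classical Wf_nat.
Open Scope R_scope.

(* Write x in I as (k + t)/q with a cell k < q and a fine coordinate t in [0, 1).  On every
   cell k except the one that R_pi sends to the last cell [1 - 1/q, 1), the map a translates
   the image cell onto another one, so F moves cell k to a cell next_cell k by a translation
   and keeps t.  From the exceptional cell, F enters cell 0 and replaces t by a(t).  The map
   next_cell permutes the cells.  If the next_cell-orbit of k avoids the exceptional cell, all
   of cell k is periodic with the period of k; otherwise the orbit passes through cell 0,
   where the first return map of F is a itself.  The odometer a has no periodic points and
   dense orbits, because on [0, 1/2) its square is a conjugate of a.  So the periodic set is a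
   union of whole cells, with periods at most q, and F is minimal on the rest. *)

Lemma least_witness (P : nat -> Prop) :
  (exists n, P n) -> exists n, P n /\ forall m, (m < n)%nat -> ~ P m.
Proof.
  intros Hex.
  destruct (dec_inh_nat_subset_has_unique_least_element P (fun n => classic (P n)) Hex)
    as [n [[Pn Hmin] _]].
  exists n; split; [exact Pn|]. intros m Hm Pm. specialize (Hmin m Pm). lia.
Qed.

Lemma maximal_block_left (G : nat -> Prop) k :
  G k -> exists a, (a <= k)%nat /\ (forall i, (a <= i <= k)%nat -> G i) /\
                   (a = 0%nat \/ ~ G (a - 1)%nat).
Proof.
  induction k as [|k IH]; intros Gk.
  - exists 0%nat. split; [lia|split; [intros i Hi; replace i with 0%nat by lia; exact Gk|now left]].
  - destruct (classic (G k)) as [Gk'|nGk].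
    + destruct (IH Gk') as [a [Ha [Hall Hend]]].
      exists a. split; [lia|split; [|exact Hend]].
      intros i Hi. destruct (Nat.eq_dec i (S k)) as [->|]; [exact Gk|apply Hall; lia].
    + exists (S k). split; [lia|split].
      * intros i Hi. replace i with (S k) by lia. exact Gk.
      * right. now replace (S k - 1)%nat with k by lia.
Qed.

Lemma maximal_block_right (G : nat -> Prop) Q k :
  (k < Q)%nat -> G k -> exists b, (k < b <= Q)%nat /\ (forall i, (k <= i < b)%nat -> G i) /\
                                  (b = Q \/ ~ G b).
Proof.
  remember (Q - S k)%nat as d eqn:Hd. revert k Hd.
  induction d as [|d IH]; intros k Hd Hk Gk.
  - exists Q. split; [lia|split; [intros i Hi; replace i with k by lia; exact Gk|now left]].
  - destruct (classic (G (S k))) as [Gk'|nGk].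
    + destruct (IH (S k) ltac:(lia) ltac:(lia) Gk') as [b [Hb [Hall Hend]]].
      exists b. split; [lia|split; [|exact Hend]].
      intros i Hi. destruct (Nat.eq_dec i k) as [->|]; [exact Gk|apply Hall; lia].
    + exists (S k). split; [lia|split; [|now right]].
      intros i Hi. replace i with k by lia. exact Gk.
Qed.

Lemma maximal_block (G : nat -> Prop) Q k :
  (k < Q)%nat -> G k ->
  exists a b, (a <= k < b)%nat /\ (b <= Q)%nat /\ (forall i, (a <= i < b)%nat -> G i) /\
              (a = 0%nat \/ ~ G (a - 1)%nat) /\ (b = Q \/ ~ G b).
Proof.
  intros Hk Gk.
  destruct (maximal_block_left G k Gk) as [a [Ha [Hleft Ha_end]]].
  destruct (maximal_block_right G Q k Hk Gk) as [b [Hb [Hright Hb_end]]].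
  exists a, b. repeat split; try lia; auto.
  intros i Hi. destruct (Nat.le_gt_cases i k); [apply Hleft|apply Hright]; lia.
Qed.

(** * Cells of the unit interval *)

Lemma Rdiv_le_mono_pos a b c : 0 < c -> (a / c <= b / c <-> a <= b).
Proof.
  intros Hc. pose proof (Rinv_0_lt_compat c Hc) as Hc'. split; intros H.
  - apply (Rmult_le_reg_r (/ c)); [exact Hc'|exact H].
  - apply Rmult_le_compat_r; [lra|exact H].
Qed.

Lemma Rdiv_lt_mono_pos a b c : 0 < c -> (a / c < b / c <-> a < b).
Proof.
  intros Hc. pose proof (Rinv_0_lt_compat c Hc) as Hc'. split; intros H.
  - apply (Rmult_lt_reg_r (/ c)); [exact Hc'|exact H].
  - apply Rmult_lt_compat_r; [exact Hc'|exact H].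
Qed.

Lemma Int_part_of_bounds (n : nat) (r : R) : INR n <= r < INR n + 1 -> Int_part r = Z.of_nat n.
Proof.
  intros H. unfold Int_part.
  enough (up r = Z.of_nat n + 1)%Z by lia.
  symmetry; apply tech_up; rewrite plus_IZR, <- INR_IZR_INZ; simpl; lra.
Qed.

Definition cell (Q : nat) (x : R) : nat := Z.to_nat (Int_part (INR Q * x)).

Definition grid (Q k : nat) (t : R) : R := (INR k + t) / INR Q.

Section Grid.
Variable Q : nat.
Hypothesis Q_pos : (0 < Q)%nat.

Let INR_Q_pos : 0 < INR Q := lt_0_INR Q Q_pos.

Lemma cell_grid k t : 0 <= t < 1 -> cell Q (grid Q k t) = k.
Proof.
  intros Ht. unfold cell, grid.
  replace (INR Q * ((INR k + t) / INR Q)) with (INR k + t) by (field; lra).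
  rewrite (Int_part_of_bounds k); [apply Nat2Z.id|lra].
Qed.

Lemma grid_decomp x : 0 <= x < 1 -> exists k t, (k < Q)%nat /\ 0 <= t < 1 /\ x = grid Q k t.
Proof.
  intros Hx.
  destruct (base_Int_part (INR Q * x)) as [H1 H2].
  set (z := Int_part (INR Q * x)) in *. clearbody z.
  assert (Hz : (-1 < z)%Z) by (apply lt_IZR; nra).
  assert (E : INR (Z.to_nat z) = IZR z).
  { rewrite INR_IZR_INZ, Z2Nat.id; [reflexivity|lia]. }
  exists (Z.to_nat z), (INR Q * x - IZR z). split; [|split; [lra|]].
  - apply INR_lt. rewrite E. nra.
  - unfold grid. rewrite E. field. lra.
Qed.

Lemma grid_inj k t k' t' : 0 <= t < 1 -> 0 <= t' < 1 ->
  grid Q k t = grid Q k' t' -> k = k' /\ t = t'.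
Proof.
  intros Ht Ht' E.
  assert (k = k') as <- by (rewrite <- (cell_grid k t), <- (cell_grid k' t'), E; auto).
  split; [reflexivity|]. unfold grid in E.
  apply Rdiv_eq_reg_r in E; lra.
Qed.

Lemma grid_le_iff a s b s' : grid Q a s <= grid Q b s' <-> INR a + s <= INR b + s'.
Proof. apply Rdiv_le_mono_pos, INR_Q_pos. Qed.

Lemma grid_lt_iff a s b s' : grid Q a s < grid Q b s' <-> INR a + s < INR b + s'.
Proof. apply Rdiv_lt_mono_pos, INR_Q_pos. Qed.

Lemma grid_0 : grid Q 0 0 = 0.
Proof. unfold grid; simpl; field; lra. Qed.

Lemma grid_Q : grid Q Q 0 = 1.
Proof. unfold grid; field; lra. Qed.

Lemma grid_range k t : (k < Q)%nat -> 0 <= t < 1 -> 0 <= grid Q k t < 1.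
Proof.
  intros Hk Ht. assert (INR k + 1 <= INR Q) by (rewrite <- S_INR; apply le_INR; lia).
  rewrite <- grid_0, <- grid_Q, grid_le_iff, grid_lt_iff. simpl. pose proof (pos_INR k). lra.
Qed.

Lemma grid_interval_decomp a b z : (b <= Q)%nat -> grid Q a 0 <= z < grid Q b 0 ->
  exists i s, (a <= i < b)%nat /\ 0 <= s < 1 /\ z = grid Q i s.
Proof.
  intros Hb [Ha Hz].
  assert (Hz1 : 0 <= z < 1).
  { pose proof (pos_INR a). apply le_INR in Hb.
    assert (grid Q 0 0 <= grid Q a 0) by (apply grid_le_iff; simpl; lra).
    assert (grid Q b 0 <= grid Q Q 0) by (apply grid_le_iff; lra).
    rewrite grid_0 in *; rewrite grid_Q in *. lra. }
  destruct (grid_decomp z Hz1) as [i [s [_ [Hs ->]]]].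
  exists i, s. split; [|auto].
  apply grid_le_iff in Ha. apply grid_lt_iff in Hz.
  split.
  - enough (INR a < INR (S i)) by (apply INR_lt in H; lia). rewrite S_INR. lra.
  - apply INR_lt. lra.
Qed.

Lemma grid_dist k s t : Rabs (grid Q k s - grid Q k t) <= Rabs (s - t).
Proof.
  assert (HQ1 : 1 <= INR Q) by (apply (le_INR 1); lia).
  unfold grid.
  replace ((INR k + s) / INR Q - (INR k + t) / INR Q) with ((s - t) / INR Q) by (field; lra).
  unfold Rdiv. rewrite Rabs_mult, Rabs_inv, (Rabs_pos_eq (INR Q)) by lra.
  pose proof (Rabs_pos (s - t)).
  assert (/ INR Q <= 1) by (rewrite <- Rinv_1; apply Rinv_le_contravar; lra).
  nra.
Qed.

End Grid.

(** * The von Neumann-Kakutani map *)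

Lemma pow2_pos n : 0 < 2 ^ n.
Proof. apply pow_lt; lra. Qed.

Lemma pow2_nat_pos M : (0 < 2 ^ M)%nat.
Proof. apply Nat.neq_0_lt_0, Nat.pow_nonzero; lia. Qed.

Lemma INR_pow2 M : INR (2 ^ M) = 2 ^ M.
Proof. now rewrite pow_INR. Qed.

Lemma small_dyadic y : 0 < y -> exists m, 1 / 2 ^ m < y.
Proof.
  intros Hy. destruct (pow_lt_1_zero (/ 2) ltac:(rewrite Rabs_pos_eq; lra) y Hy) as [m Hm].
  exists m. specialize (Hm m (le_n _)).
  rewrite Rabs_pos_eq, pow_inv in Hm by (apply pow_le; lra). unfold Rdiv; lra.
Qed.

Definition on_level (x : R) (n : nat) : Prop :=
  (1 <= n)%nat /\ 1 - 2 / 2 ^ n <= x < 1 - 1 / 2 ^ n.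

Lemma dyadic_antitone n m : (n < m)%nat -> 2 / 2 ^ m <= 1 / 2 ^ n.
Proof.
  intros Hnm. pose proof (pow2_pos n).
  assert (2 * 2 ^ n <= 2 ^ m) by (change (2 ^ S n <= 2 ^ m); apply Rle_pow; lra || lia).
  replace (1 / 2 ^ n) with (2 * / (2 * 2 ^ n)) by (field; lra).
  apply Rmult_le_compat_l; [lra|]. apply Rinv_le_contravar; lra.
Qed.

Lemma on_level_unique x n m : on_level x n -> on_level x m -> n = m.
Proof.
  intros [_ Hn] [_ Hm].
  destruct (lt_eq_lt_dec n m) as [[Hlt|]|Hlt]; auto;
    pose proof (dyadic_antitone _ _ Hlt); lra.
Qed.

Lemma vnk_on_level x n : on_level x n -> vnk x = x - (1 - 3 / 2 ^ n).
Proof.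
  intros Hn. unfold vnk. replace (vnk_level x) with n; [reflexivity|].
  apply (on_level_unique x); [exact Hn|].
  apply (epsilon_spec (inhabits 1%nat) (on_level x)). now exists n.
Qed.

Lemma on_level_exists x : 0 <= x < 1 -> exists n, on_level x n.
Proof.
  intros Hx. destruct (small_dyadic (1 - x)) as [m Hm]; [lra|].
  assert (x < 1 - 1 / 2 ^ m) by lra. clear Hm.
  induction m as [|m IH].
  - simpl in *; lra.
  - destruct (Rlt_le_dec x (1 - 1 / 2 ^ m)) as [Hlt|Hge]; [now apply IH|].
    exists (S m). split; [lia|]. simpl in *.
    replace (2 / (2 * 2 ^ m)) with (1 / 2 ^ m) by (field; apply pow_nonzero; lra). lra.
Qed.

Lemma dyadic_scale_exists y : 0 < y < 1 -> exists n, (1 <= n)%nat /\ 1 / 2 ^ n <= y < 2 / 2 ^ n.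
Proof.
  intros Hy. destruct (small_dyadic y) as [m Hm]; [lra|].
  assert (1 / 2 ^ m <= y) by lra. clear Hm.
  induction m as [|m IH].
  - simpl in *; lra.
  - destruct (Rle_lt_dec (1 / 2 ^ m) y) as [Hle|Hlt]; [now apply IH|].
    exists (S m). split; [lia|]. simpl in *.
    replace (2 / (2 * 2 ^ m)) with (1 / 2 ^ m) by (field; apply pow_nonzero; lra). lra.
Qed.

Lemma vnk_on_level_range x n : on_level x n -> 1 / 2 ^ n <= vnk x < 2 / 2 ^ n.
Proof.
  intros Hn. rewrite (vnk_on_level x n Hn). destruct Hn as [_ Hn].
  assert (3 / 2 ^ n = 1 / 2 ^ n + 2 / 2 ^ n) by (field; apply pow_nonzero; lra). lra.
Qed.

Lemma level_dyadic_bounds n : (1 <= n)%nat -> 0 < 1 / 2 ^ n /\ 2 / 2 ^ n <= 1.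
Proof.
  intros Hn. split; [apply Rdiv_lt_0_compat; [lra|apply pow2_pos]|].
  replace 1 with (2 / 2 ^ 1) at 2 by (simpl; lra).
  destruct (Nat.eq_dec n 1) as [->|]; [lra|].
  pose proof (dyadic_antitone 1 n ltac:(lia)). simpl in *. lra.
Qed.

Lemma vnk_range x : 0 <= x < 1 -> 0 < vnk x < 1.
Proof.
  intros Hx. destruct (on_level_exists x Hx) as [n Hn].
  pose proof (vnk_on_level_range x n Hn).
  pose proof (level_dyadic_bounds n (proj1 Hn)). lra.
Qed.

Lemma vnk_inj x y : 0 <= x < 1 -> 0 <= y < 1 -> vnk x = vnk y -> x = y.
Proof.
  intros Hx Hy E.
  destruct (on_level_exists x Hx) as [n Hn], (on_level_exists y Hy) as [m Hm].
  pose proof (vnk_on_level_range x n Hn). pose proof (vnk_on_level_range y m Hm).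
  assert (n = m) as <-.
  { destruct (lt_eq_lt_dec n m) as [[Hlt|]|Hlt]; auto;
      pose proof (dyadic_antitone _ _ Hlt); lra. }
  rewrite (vnk_on_level x n Hn), (vnk_on_level y n Hm) in E. lra.
Qed.

Lemma vnk_surj y : 0 < y < 1 -> exists x, 0 <= x < 1 /\ vnk x = y.
Proof.
  intros Hy. destruct (dyadic_scale_exists y Hy) as [n [Hn Hyn]].
  pose proof (level_dyadic_bounds n Hn).
  assert (3 / 2 ^ n = 1 / 2 ^ n + 2 / 2 ^ n) by (field; apply pow_nonzero; lra).
  assert (Hl : on_level (y + (1 - 3 / 2 ^ n)) n) by (split; [exact Hn|lra]).
  exists (y + (1 - 3 / 2 ^ n)). split; [lra|]. rewrite (vnk_on_level _ n Hl). lra.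
Qed.

Lemma vnk_last_cell M t : 0 <= t < 1 ->
  vnk (grid (2 ^ M) (2 ^ M - 1) t) = grid (2 ^ M) 0 (vnk t).
Proof.
  intros Ht. destruct (on_level_exists t Ht) as [n [Hn [Hlo Hhi]]].
  pose proof (pow2_pos n). pose proof (pow2_pos M).
  assert (E : grid (2 ^ M) (2 ^ M - 1) t = 1 - (1 - t) / 2 ^ M).
  { unfold grid. rewrite minus_INR by (pose proof (pow2_nat_pos M); lia).
    rewrite INR_pow2. simpl. field. lra. }
  assert (Hl : on_level (grid (2 ^ M) (2 ^ M - 1) t) (n + M)).
  { split; [lia|]. rewrite E, pow_add.
    replace (2 / (2 ^ n * 2 ^ M)) with ((2 / 2 ^ n) / 2 ^ M) by (field; lra).
    replace (1 / (2 ^ n * 2 ^ M)) with ((1 / 2 ^ n) / 2 ^ M) by (field; lra).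
    pose proof (proj2 (Rdiv_le_mono_pos (1 - t) (2 / 2 ^ n) (2 ^ M) ltac:(lra)) ltac:(lra)).
    pose proof (proj2 (Rdiv_lt_mono_pos (1 / 2 ^ n) (1 - t) (2 ^ M) ltac:(lra)) ltac:(lra)).
    lra. }
  rewrite (vnk_on_level _ _ Hl), (vnk_on_level t n (conj Hn (conj Hlo Hhi))), E.
  unfold grid. rewrite INR_pow2, pow_add. simpl. field. lra.
Qed.

Lemma vnk_lower_half t : 0 <= t < 1 -> vnk (t / 2) = (1 + t) / 2.
Proof.
  intros Ht. assert (Hl : on_level (t / 2) 1) by (split; [lia|simpl; lra]).
  rewrite (vnk_on_level _ _ Hl). simpl. lra.
Qed.

Lemma vnk_upper_half t : 0 <= t < 1 -> vnk ((1 + t) / 2) = vnk t / 2.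
Proof.
  intros Ht. pose proof (vnk_last_cell 1 t Ht) as E. unfold grid in E. simpl in E.
  replace (1 + 1) with 2 in E by ring. rewrite E. field.
Qed.

Lemma vnk_grid_shift N j : (j < 2 ^ N - 1)%nat ->
  exists s, (s < 2 ^ N)%nat /\ forall t, 0 <= t < 1 -> vnk (grid (2 ^ N) j t) = grid (2 ^ N) s t.
Proof.
  intros Hj.
  (* With this e, the cell j lies inside the level N - e of a. *)
  set (e := Nat.log2 (2 ^ N - j - 1)).
  assert (He : (2 ^ e <= 2 ^ N - j - 1 < 2 * 2 ^ e)%nat) by (apply Nat.log2_spec; lia).
  assert (HeN : (e < N)%nat) by (apply Nat.log2_lt_pow2; lia).
  assert (HeN' : (2 * 2 ^ e <= 2 ^ N)%nat)
    by (change (2 ^ S e <= 2 ^ N)%nat; apply Nat.pow_le_mono_r; lia).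
  exists (j + 3 * 2 ^ e - 2 ^ N)%nat. split; [lia|]. intros t Ht.
  set (n := (N - e)%nat).
  assert (PN : 2 ^ N = 2 ^ n * 2 ^ e) by (rewrite <- pow_add; f_equal; unfold n; lia).
  pose proof (pow2_pos n). pose proof (pow2_pos e).
  assert (Hlo : 2 ^ N <= INR j + 2 * 2 ^ e).
  { assert (Hnat : (2 ^ N <= j + 2 * 2 ^ e)%nat) by lia. apply le_INR in Hnat.
    rewrite plus_INR, mult_INR, !INR_pow2 in Hnat. simpl in Hnat. lra. }
  assert (Hhi : INR j + 1 + 2 ^ e <= 2 ^ N).
  { assert (Hnat : (j + 1 + 2 ^ e <= 2 ^ N)%nat) by lia. apply le_INR in Hnat.
    rewrite !plus_INR, !INR_pow2 in Hnat. simpl in Hnat. lra. }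
  assert (Hl : on_level (grid (2 ^ N) j t) n).
  { split; [unfold n; lia|]. unfold grid. rewrite INR_pow2.
    replace (1 - 2 / 2 ^ n) with ((2 ^ N - 2 * 2 ^ e) / 2 ^ N) by (rewrite PN; field; lra).
    replace (1 - 1 / 2 ^ n) with ((2 ^ N - 2 ^ e) / 2 ^ N) by (rewrite PN; field; lra).
    rewrite Rdiv_le_mono_pos, Rdiv_lt_mono_pos by (apply pow2_pos). lra. }
  rewrite (vnk_on_level _ _ Hl). unfold grid.
  rewrite minus_INR by lia. rewrite plus_INR, mult_INR, !INR_pow2, PN. simpl. field. lra.
Qed.

Lemma iter_vnk_range m t : 0 <= t < 1 -> 0 <= Nat.iter m vnk t < 1.
Proof.
  intros Ht. induction m as [|m IH]; [exact Ht|].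
  simpl. pose proof (vnk_range _ IH). lra.
Qed.

Lemma iter_vnk_even m s : 0 <= s < 1 ->
  Nat.iter (2 * m) vnk (s / 2) = Nat.iter m vnk s / 2.
Proof.
  intros Hs. induction m as [|m IH]; [reflexivity|].
  replace (2 * S m)%nat with (S (S (2 * m))) by lia.
  rewrite !Nat.iter_succ, IH, vnk_lower_half, vnk_upper_half; auto using iter_vnk_range.
Qed.

Lemma iter_vnk_odd m s : 0 <= s < 1 ->
  Nat.iter (S (2 * m)) vnk (s / 2) = (1 + Nat.iter m vnk s) / 2.
Proof.
  intros Hs. rewrite Nat.iter_succ, iter_vnk_even by exact Hs.
  apply vnk_lower_half, iter_vnk_range, Hs.
Qed.

Lemma vnk_enters_lower_half t : 0 <= t < 1 ->
  exists e s, 0 <= s < 1 /\ Nat.iter e vnk t = s / 2.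
Proof.
  intros Ht. destruct (Rlt_le_dec t (1 / 2)).
  - exists 0%nat, (2 * t). split; [lra|simpl; lra].
  - exists 1%nat, (vnk (2 * t - 1)). split; [pose proof (vnk_range (2 * t - 1)); lra|].
    simpl. rewrite <- vnk_upper_half by lra. f_equal. lra.
Qed.

Lemma vnk_aperiodic m t : (1 <= m)%nat -> 0 <= t < 1 -> Nat.iter m vnk t <> t.
Proof.
  revert t. induction m as [m IH] using (well_founded_induction lt_wf). intros t Hm.
  assert (Half : forall s, 0 <= s < 1 -> Nat.iter m vnk (s / 2) <> s / 2).
  { intros s Hs E. destruct (Nat.Even_or_Odd m) as [[m' ->]|[m' ->]].
    - rewrite iter_vnk_even in E by exact Hs.
      apply (IH m' ltac:(lia) s); [lia|exact Hs|lra].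
    - rewrite Nat.add_1_r, iter_vnk_odd in E by exact Hs.
      pose proof (iter_vnk_range m' s Hs). lra. }
  intros Ht E. destruct (vnk_enters_lower_half t Ht) as [e [s [Hs Es]]].
  apply (Half s Hs). rewrite <- Es, <- Nat.iter_add, Nat.add_comm, Nat.iter_add, E.
  reflexivity.
Qed.

Lemma vnk_orbit_visits n t j : 0 <= t < 1 -> (j < 2 ^ n)%nat ->
  exists m, INR j / 2 ^ n <= Nat.iter m vnk t < (INR j + 1) / 2 ^ n.
Proof.
  revert t j. induction n as [|n IH]; intros t j Ht Hj.
  - exists 0%nat. replace j with 0%nat by (simpl in Hj; lia). simpl. lra.
  - destruct (vnk_enters_lower_half t Ht) as [e [s [Hs Es]]].
    pose proof (pow2_pos n). rewrite Nat.pow_succ_r' in Hj. simpl (2 ^ S n).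
    destruct (Nat.lt_ge_cases j (2 ^ n)) as [Hlt|Hge].
    + destruct (IH s j Hs Hlt) as [m Hm]. exists (2 * m + e)%nat.
      rewrite Nat.iter_add, Es, iter_vnk_even by exact Hs.
      replace (INR j / (2 * 2 ^ n)) with ((INR j / 2 ^ n) / 2) by (field; lra).
      replace ((INR j + 1) / (2 * 2 ^ n)) with (((INR j + 1) / 2 ^ n) / 2) by (field; lra).
      lra.
    + destruct (IH s (j - 2 ^ n)%nat Hs ltac:(lia)) as [m Hm]. exists (S (2 * m) + e)%nat.
      rewrite Nat.iter_add, Es, iter_vnk_odd by exact Hs.
      rewrite minus_INR, INR_pow2 in Hm by lia.
      replace (INR j / (2 * 2 ^ n)) with ((1 + (INR j - 2 ^ n) / 2 ^ n) / 2) by (field; lra).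
      replace ((INR j + 1) / (2 * 2 ^ n)) with ((1 + (INR j - 2 ^ n + 1) / 2 ^ n) / 2)
        by (field; lra).
      lra.
Qed.

Lemma vnk_orbit_dense t z eps : 0 <= t < 1 -> 0 <= z < 1 -> 0 < eps ->
  exists m, Rabs (Nat.iter m vnk t - z) < eps.
Proof.
  intros Ht Hz He. destruct (small_dyadic eps He) as [n Hn].
  destruct (grid_decomp (2 ^ n) (pow2_nat_pos n) z Hz) as [j [r [Hj [Hr ->]]]].
  destruct (vnk_orbit_visits n t j Ht Hj) as [m Hm]. exists m.
  unfold grid in *. rewrite INR_pow2 in *. pose proof (pow2_pos n).
  rewrite Rdiv_plus_distr in *.
  assert (0 <= r / 2 ^ n < 1 / 2 ^ n).
  { split; [apply Rmult_le_pos; [lra|left; apply Rinv_0_lt_compat; lra]|].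
    apply Rdiv_lt_mono_pos; lra. }
  apply Rabs_def1; lra.
Qed.

(** * Injective self-maps of a finite set *)

Lemma iter_fixed_mul {A} (f : A -> A) p y :
  Nat.iter p f y = y -> forall m, Nat.iter (m * p) f y = y.
Proof.
  intros E m. induction m as [|m IH]; [reflexivity|].
  simpl. rewrite Nat.iter_add, IH, E. reflexivity.
Qed.

Lemma iter_fixed_mod {A} (f : A -> A) L y J :
  (L <> 0)%nat -> Nat.iter L f y = y -> Nat.iter (J mod L) f y = Nat.iter J f y.
Proof.
  intros HL E.
  transitivity (Nat.iter (J mod L + J / L * L) f y).
  - now rewrite Nat.iter_add, (iter_fixed_mul f L y E).
  - f_equal. pose proof (Nat.div_mod_eq J L). lia.
Qed.

Section FinitePermutation.
Variable f : nat -> nat.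
Variable Q : nat.
Hypothesis f_lt : forall k, (k < Q)%nat -> (f k < Q)%nat.
Hypothesis f_inj : forall a b, (a < Q)%nat -> (b < Q)%nat -> f a = f b -> a = b.

Lemma iter_lt i k : (k < Q)%nat -> (Nat.iter i f k < Q)%nat.
Proof. intros Hk. induction i; simpl; auto. Qed.

Lemma iter_inj i a b : (a < Q)%nat -> (b < Q)%nat -> Nat.iter i f a = Nat.iter i f b -> a = b.
Proof.
  intros Ha Hb. induction i as [|i IH]; simpl; auto.
  intros E. apply IH, f_inj; auto using iter_lt.
Qed.

(* Pigeonhole: the Q + 1 points f^0 k, ..., f^Q k of {0, ..., Q - 1} cannot be distinct. *)
Lemma iter_returns k : (k < Q)%nat -> exists p, (1 <= p <= Q)%nat /\ Nat.iter p f k = k.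
Proof.
  intros Hk. apply NNPP; intros Hnone.
  set (g := fun i => Nat.iter i f k).
  assert (Hdistinct : forall i j, (i < j <= Q)%nat -> g i <> g j).
  { intros i j Hij Eij. apply Hnone. exists (j - i)%nat. split; [lia|].
    unfold g in Eij. replace j with (i + (j - i))%nat in Eij by lia.
    rewrite Nat.iter_add in Eij. symmetry. apply (iter_inj i); auto using iter_lt. }
  assert (Hnodup : NoDup (map g (seq 0 (S Q)))).
  { apply NoDup_map_NoDup_ForallPairs; [|apply seq_NoDup].
    intros a b Ha Hb E. apply in_seq in Ha, Hb.
    destruct (lt_eq_lt_dec a b) as [[Hlt|Heq]|Hlt]; [|exact Heq|].
    + exfalso. apply (Hdistinct a b); [lia|exact E].
    + exfalso. apply (Hdistinct b a); [lia|now symmetry]. }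
  assert (Hincl : incl (map g (seq 0 (S Q))) (seq 0 Q)).
  { intros y Hy. apply in_map_iff in Hy as [i [<- _]]. apply in_seq. unfold g.
    pose proof (iter_lt i k Hk). lia. }
  pose proof (NoDup_incl_length Hnodup Hincl). rewrite length_map, !length_seq in *. lia.
Qed.

Lemma iter_reverse m a : (a < Q)%nat -> exists j, Nat.iter j f (Nat.iter m f a) = a.
Proof.
  intros Ha. destruct (iter_returns a Ha) as [p [Hp Ep]].
  exists ((p - 1) * m)%nat. rewrite <- Nat.iter_add.
  replace ((p - 1) * m + m)%nat with (m * p)%nat by nia. apply iter_fixed_mul, Ep.
Qed.

Lemma fin_surj y : (y < Q)%nat -> exists x, (x < Q)%nat /\ f x = y.
Proof.
  intros Hy. destruct (iter_returns y Hy) as [p [Hp E]].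
  exists (Nat.iter (p - 1) f y). split; [apply iter_lt, Hy|].
  replace p with (S (p - 1)) in E by lia. exact E.
Qed.

End FinitePermutation.

(** * Periodic points *)

Lemma least_period_exists F x : periodic F x -> exists p, least_period F x p.
Proof.
  intros [_ Hex]. destruct (least_witness _ Hex) as [p [[Hp Ep] Hmin]].
  exists p. split; [exact Hp|split; [exact Ep|]].
  intros m Hm1 Hmp E. exact (Hmin m Hmp (conj Hm1 E)).
Qed.

Lemma least_period_le F x p m :
  least_period F x p -> (1 <= m)%nat -> iterF F m x = x -> (p <= m)%nat.
Proof.
  intros [_ [_ Hmin]] Hm E. destruct (le_lt_dec p m) as [|Hlt]; [assumption|].
  exfalso. exact (Hmin m Hm Hlt E).
Qed.

Lemma max_per_interval_periodic F x y z : max_per_interval F x y -> x <= z < y -> periodic F z.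
Proof.
  intros [p [[_ Hper] _]] Hz. destruct (Hper z Hz) as [HI [Hp [Ep _]]].
  split; [exact HI|]. now exists p.
Qed.

Section PeriodicPoints.
Variable F : R -> R.
Hypothesis F_maps_I : forall x, in_I x -> in_I (F x).
Hypothesis F_inj_I : forall x y, in_I x -> in_I y -> F x = F y -> x = y.

Lemma iterF_in_I n x : in_I x -> in_I (iterF F n x).
Proof. intros Hx. induction n; simpl; auto. Qed.

Lemma periodic_F x : periodic F x -> periodic F (F x).
Proof.
  intros [HI [p [Hp Ep]]]. split; [auto|]. exists p. split; [exact Hp|].
  unfold iterF in *. now rewrite Nat.iter_swap, Ep.
Qed.

Lemma periodic_iterF n x : periodic F x -> periodic F (iterF F n x).
Proof. intros Hx. induction n; [exact Hx|]. now apply periodic_F. Qed.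

Lemma periodic_of_F x : in_I x -> periodic F (F x) -> periodic F x.
Proof.
  intros HI [_ [p [Hp Ep]]]. split; [exact HI|]. exists p. split; [exact Hp|].
  unfold iterF in *. rewrite Nat.iter_swap in Ep.
  apply F_inj_I; [apply iterF_in_I|..]; assumption.
Qed.

Lemma periodic_preimage y : periodic F y -> exists! x, periodic F x /\ F x = y.
Proof.
  intros Hy. destruct Hy as [HI [p [Hp Ep]]].
  assert (Epred : F (iterF F (p - 1) y) = y).
  { unfold iterF in *. replace p with (S (p - 1)) in Ep by lia. exact Ep. }
  exists (iterF F (p - 1) y). split.
  - split; [|exact Epred]. apply periodic_iterF. split; [exact HI|]. now exists p.
  - intros x [[Hx _] Ex]. apply F_inj_I; [now apply iterF_in_I|exact Hx|congruence].
Qed.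

End PeriodicPoints.

(** * The rotated odometer *)

Section RotatedOdometer.
Variable N : nat.
Variable pi : nat -> nat.
Hypothesis Hpi : is_perm (2 ^ N) pi.

Notation q := (2 ^ N)%nat.
Notation F := (Fpi N pi).

Let q_pos : (0 < q)%nat := pow2_nat_pos N.

Definition sent_to_last (k : nat) : Prop := pi k = (q - 1)%nat.

Definition next_cell (k : nat) : nat := cell q (F (grid q k 0)).

Lemma rot_grid k t : (k < q)%nat -> 0 <= t < 1 -> rot q pi (grid q k t) = grid q (pi k) t.
Proof.
  intros Hk Ht. unfold rot; cbv zeta.
  change (Z.to_nat (Int_part (INR q * grid q k t))) with (cell q (grid q k t)).
  rewrite cell_grid by assumption. pose proof (lt_0_INR q q_pos).
  unfold grid. field. lra.
Qed.

Lemma F_grid_last k t : (k < q)%nat -> sent_to_last k -> 0 <= t < 1 ->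
  F (grid q k t) = grid q 0 (vnk t).
Proof.
  intros Hk Hlast Ht. unfold Fpi. rewrite rot_grid, Hlast by assumption.
  now apply vnk_last_cell.
Qed.

Lemma next_cell_last k : (k < q)%nat -> sent_to_last k -> next_cell k = 0%nat.
Proof.
  intros Hk Hlast. unfold next_cell. rewrite F_grid_last by (auto; lra).
  apply cell_grid; [exact q_pos|]. pose proof (vnk_range 0). lra.
Qed.

Lemma next_cell_shift k : (k < q)%nat -> ~ sent_to_last k ->
  (next_cell k < q)%nat /\ forall t, 0 <= t < 1 -> F (grid q k t) = grid q (next_cell k) t.
Proof.
  intros Hk Hnot.
  assert (Hpk : (pi k < q - 1)%nat)
    by (pose proof (proj1 Hpi k Hk); unfold sent_to_last in Hnot; lia).
  destruct (vnk_grid_shift N (pi k) Hpk) as [s [Hs Eshift]].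
  assert (HF : forall t, 0 <= t < 1 -> F (grid q k t) = grid q s t).
  { intros t Ht. unfold Fpi. rewrite rot_grid by assumption. now apply Eshift. }
  assert (next_cell k = s) as ->
    by (unfold next_cell; rewrite HF by lra; apply cell_grid; [exact q_pos|lra]).
  split; assumption.
Qed.

Lemma next_cell_lt k : (k < q)%nat -> (next_cell k < q)%nat.
Proof.
  intros Hk. destruct (classic (sent_to_last k)) as [Hlast|Hnot].
  - now rewrite next_cell_last.
  - now apply next_cell_shift.
Qed.

Lemma F_grid_shift k t : (k < q)%nat -> ~ sent_to_last k -> 0 <= t < 1 ->
  F (grid q k t) = grid q (next_cell k) t.
Proof. intros Hk Hnot. now apply next_cell_shift. Qed.

Lemma F_range x : 0 <= x < 1 -> 0 < F x < 1.
Proof.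
  intros Hx. destruct (grid_decomp q q_pos x Hx) as [k [t [Hk [Ht ->]]]].
  unfold Fpi. rewrite rot_grid by assumption.
  apply vnk_range, grid_range; [exact q_pos|apply Hpi, Hk|exact Ht].
Qed.

Lemma F_in_I x : in_I x -> in_I (F x).
Proof. intros Hx. pose proof (F_range x Hx). unfold in_I. lra. Qed.

Lemma F_inj x y : 0 <= x < 1 -> 0 <= y < 1 -> F x = F y -> x = y.
Proof.
  intros Hx Hy E.
  destruct (grid_decomp q q_pos x Hx) as [k [t [Hk [Ht ->]]]].
  destruct (grid_decomp q q_pos y Hy) as [k' [t' [Hk' [Ht' ->]]]].
  unfold Fpi in E. rewrite !rot_grid in E by assumption.
  apply vnk_inj in E; try (apply grid_range; auto; apply Hpi; assumption).
  apply grid_inj in E as [Ek Et]; auto.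
  apply (proj2 Hpi) in Ek; auto. now subst.
Qed.

Lemma F_surj y : 0 < y < 1 -> exists x, 0 <= x < 1 /\ F x = y.
Proof.
  intros Hy. destruct (vnk_surj y Hy) as [u [Hu <-]].
  destruct (grid_decomp q q_pos u Hu) as [j [t [Hj [Ht ->]]]].
  destruct (fin_surj pi q (proj1 Hpi) (proj2 Hpi) j Hj) as [k [Hk <-]].
  exists (grid q k t). split; [now apply grid_range|].
  unfold Fpi. now rewrite rot_grid.
Qed.

Lemma next_cell_inj a b : (a < q)%nat -> (b < q)%nat -> next_cell a = next_cell b -> a = b.
Proof.
  intros Ha Hb E.
  assert (Hmixed : forall a b, (a < q)%nat -> (b < q)%nat -> ~ sent_to_last a -> sent_to_last b ->
                   next_cell a <> next_cell b).
  { clear a b Ha Hb E. intros a b Ha Hb Ha_not Hb_last E.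
    rewrite (next_cell_last b Hb Hb_last) in E.
    pose proof (F_range (grid q a 0) (grid_range q q_pos a 0 Ha ltac:(lra))) as Hpos.
    rewrite F_grid_shift, E, grid_0 in Hpos by (auto; lra). lra. }
  destruct (classic (sent_to_last a)) as [Ha_last|Ha_not],
           (classic (sent_to_last b)) as [Hb_last|Hb_not].
  - apply (proj2 Hpi); auto. unfold sent_to_last in *. congruence.
  - exfalso. exact (Hmixed b a Hb Ha Hb_not Ha_last (eq_sym E)).
  - exfalso. exact (Hmixed a b Ha Hb Ha_not Hb_last E).
  - assert (EF : F (grid q a 0) = F (grid q b 0))
      by (rewrite !F_grid_shift by (auto; lra); congruence).
    apply F_inj, grid_inj in EF; try (apply grid_range; auto; lra); lra || tauto.
Qed.

Lemma iter_next_cell_lt i k : (k < q)%nat -> (Nat.iter i next_cell k < q)%nat.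
Proof. apply iter_lt, next_cell_lt. Qed.

Lemma iter_F_grid m k t : (k < q)%nat -> 0 <= t < 1 ->
  (forall i, (i < m)%nat -> ~ sent_to_last (Nat.iter i next_cell k)) ->
  Nat.iter m F (grid q k t) = grid q (Nat.iter m next_cell k) t.
Proof.
  intros Hk Ht. induction m as [|m IH]; intros Havoid; [reflexivity|].
  simpl. rewrite IH by (intros i Hi; apply Havoid; lia).
  apply F_grid_shift; auto using iter_next_cell_lt.
Qed.

Lemma iter_F_grid_last m k t : (k < q)%nat -> 0 <= t < 1 ->
  (forall i, (i < m)%nat -> ~ sent_to_last (Nat.iter i next_cell k)) ->
  sent_to_last (Nat.iter m next_cell k) ->
  Nat.iter (S m) F (grid q k t) = grid q 0 (vnk t).
Proof.
  intros Hk Ht Havoid Hlast. rewrite Nat.iter_succ, iter_F_grid by assumption.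
  apply F_grid_last; auto using iter_next_cell_lt.
Qed.

Lemma zero_reaches_last : exists m, sent_to_last (Nat.iter m next_cell 0%nat) /\
  forall i, (i < m)%nat -> ~ sent_to_last (Nat.iter i next_cell 0%nat).
Proof.
  apply least_witness.
  destruct (fin_surj pi q (proj1 Hpi) (proj2 Hpi) (q - 1)) as [k [Hk Hlast]]; [lia|].
  destruct (iter_reverse next_cell q next_cell_lt next_cell_inj 1 k Hk) as [j Ej].
  exists j. simpl in Ej. rewrite next_cell_last in Ej by assumption. now rewrite Ej.
Qed.

(* The first return map of F to the cell [0, 1/q) is the odometer a, rescaled by 1/q. *)
Lemma first_return_zero : exists L, (0 < L)%nat /\ Nat.iter L next_cell 0%nat = 0%nat /\
  (forall j s, (j < L)%nat -> 0 <= s < 1 ->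
     Nat.iter j F (grid q 0 s) = grid q (Nat.iter j next_cell 0%nat) s) /\
  (forall n s, 0 <= s < 1 -> Nat.iter (n * L) F (grid q 0 s) = grid q 0 (Nat.iter n vnk s)).
Proof.
  destruct zero_reaches_last as [m [Hlast Havoid]].
  exists (S m). split; [lia|split; [|split]].
  - rewrite Nat.iter_succ. apply next_cell_last; auto using iter_next_cell_lt.
  - intros j s Hj Hs. apply iter_F_grid; auto. intros i Hi. apply Havoid. lia.
  - intros n s Hs. induction n as [|n IH]; [reflexivity|].
    rewrite Nat.mul_succ_l, Nat.add_comm, Nat.iter_add, IH, Nat.iter_succ.
    apply iter_F_grid_last; auto using iter_vnk_range.
Qed.

Lemma periodic_grid_iff k t : (k < q)%nat -> 0 <= t < 1 ->
  periodic F (grid q k t) <-> forall m, ~ sent_to_last (Nat.iter m next_cell k).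
Proof.
  intros Hk Ht. split.
  - intros Hper m0 Hm0.
    destruct (least_witness (fun m => sent_to_last (Nat.iter m next_cell k)) (ex_intro _ m0 Hm0))
      as [m [Hlast Havoid]].
    pose proof (periodic_iterF F F_in_I (S m) _ Hper) as Hper0.
    unfold iterF in Hper0. rewrite iter_F_grid_last in Hper0 by assumption.
    destruct Hper0 as [_ [p [Hp Ep]]].
    destruct first_return_zero as [L [HL [_ [_ Hreturn]]]].
    assert (Hu : 0 <= vnk t < 1) by (pose proof (vnk_range t Ht); lra).
    pose proof (iter_fixed_mul F p _ Ep L) as E.
    rewrite Nat.mul_comm, Hreturn in E by exact Hu.
    apply grid_inj in E as [_ E]; auto using iter_vnk_range.
    exact (vnk_aperiodic p _ Hp Hu E).
  - intros Havoid. split; [now apply grid_range|].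
    destruct (iter_returns next_cell q next_cell_lt next_cell_inj k Hk) as [p [Hp Ep]].
    exists p. split; [lia|]. unfold iterF. rewrite iter_F_grid, Ep; auto.
Qed.

Lemma periodic_grid_iterF m k t : (k < q)%nat -> 0 <= t < 1 -> periodic F (grid q k t) ->
  iterF F m (grid q k t) = grid q (Nat.iter m next_cell k) t.
Proof.
  intros Hk Ht Hper. apply iter_F_grid; auto.
  intros i _. now apply (periodic_grid_iff k t).
Qed.

Lemma least_period_grid_indep k t t' p : (k < q)%nat -> 0 <= t < 1 -> 0 <= t' < 1 ->
  least_period F (grid q k t) p -> least_period F (grid q k t') p.
Proof.
  intros Hk Ht Ht' Hlp.
  assert (Hper : forall s, 0 <= s < 1 -> periodic F (grid q k s)).
  { intros s Hs. apply periodic_grid_iff; auto. apply (periodic_grid_iff k t); auto.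
    destruct Hlp as [Hp [Ep _]]. split; [now apply grid_range|]. now exists p. }
  assert (Hfix : forall m s, 0 <= s < 1 ->
                 iterF F m (grid q k s) = grid q k s <-> Nat.iter m next_cell k = k).
  { intros m s Hs. rewrite periodic_grid_iterF by auto using Hper.
    split; [intros E; now apply grid_inj in E|intros ->; reflexivity]. }
  destruct Hlp as [Hp [Ep Hmin]]. split; [exact Hp|split].
  - apply Hfix, (Hfix p t); auto.
  - intros m Hm1 Hmp E. apply (Hmin m Hm1 Hmp), (Hfix m t Ht), (Hfix m t' Ht'), E.
Qed.

Definition cell_period (k p : nat) : Prop :=
  (k < q)%nat /\ forall t, 0 <= t < 1 -> least_period F (grid q k t) p.

Lemma cell_period_of k t p : (k < q)%nat -> 0 <= t < 1 ->
  least_period F (grid q k t) p -> cell_period k p.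
Proof.
  intros Hk Ht Hlp. split; [exact Hk|].
  intros t' Ht'. now apply (least_period_grid_indep k t).
Qed.

Lemma grid_cells_lt a b : (a < b)%nat -> grid q a 0 < grid q b 0.
Proof. intros Hab. apply grid_lt_iff; [exact q_pos|]. apply lt_INR in Hab. lra. Qed.

Lemma per_interval_cells a b p : (a < b <= q)%nat ->
  (forall i, (a <= i < b)%nat -> cell_period i p) -> per_interval F p (grid q a 0) (grid q b 0).
Proof.
  intros Hab Hcells. split; [apply grid_cells_lt; lia|].
  intros z Hz. destruct (grid_interval_decomp q q_pos a b z ltac:(lia) Hz) as [i [s [Hi [Hs ->]]]].
  destruct (Hcells i Hi) as [Hiq Hlp]. split; [now apply grid_range|now apply Hlp].
Qed.

Lemma max_per_interval_cells a b p : (a < b <= q)%nat ->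
  (forall i, (a <= i < b)%nat -> cell_period i p) ->
  (a = 0%nat \/ ~ cell_period (a - 1) p) -> (b = q \/ ~ cell_period b p) ->
  max_per_interval F (grid q a 0) (grid q b 0).
Proof.
  intros Hab Hcells Ha_end Hb_end. exists p. split; [now apply per_interval_cells|].
  intros x' y' [Hxy Hper] Hx' Hy'.
  pose proof (grid_cells_lt a b ltac:(lia)).
  split; [apply Rle_antisym; [exact Hx'|apply Rnot_lt_le; intros Hlt]|
          apply Rle_antisym; [apply Rnot_lt_le; intros Hlt|exact Hy']].
  - destruct (Hper x' ltac:(lra)) as [[Hx'0 _] _].
    destruct Ha_end as [->|Hnot]; [rewrite grid_0 in Hlt by exact q_pos; lra|apply Hnot].
    assert (Ha : (0 < a)%nat) by (destruct a; [rewrite grid_0 in Hlt by exact q_pos; lra|lia]).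
    pose proof (grid_cells_lt (a - 1) a ltac:(lia)).
    set (z := Rmax x' (grid q (a - 1) 0)).
    assert (Hz : grid q (a - 1) 0 <= z < grid q a 0)
      by (split; [apply Rmax_r|apply Rmax_lub_lt; lra]).
    destruct (grid_interval_decomp q q_pos (a - 1) a z ltac:(lia) Hz) as [i [s [Hi [Hs Ez]]]].
    replace i with (a - 1)%nat in Ez by lia.
    apply (cell_period_of (a - 1) s p); [lia|exact Hs|]. rewrite <- Ez.
    apply Hper. split; [apply Rmax_l|lra].
  - destruct (Hper (grid q b 0) ltac:(lra)) as [HI Hlp].
    assert (Hb : (b < q)%nat).
    { destruct (Nat.eq_dec b q) as [->|]; [|lia].
      rewrite grid_Q in HI by exact q_pos. destruct HI; lra. }
    destruct Hb_end as [->|Hnot]; [lia|].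
    apply Hnot, (cell_period_of b 0 p); [exact Hb|lra|exact Hlp].
Qed.

Lemma periodic_cells_covered : exists l : list (R * R),
  (forall xy, In xy l -> max_per_interval F (fst xy) (snd xy)) /\
  (forall k t, (k < q)%nat -> 0 <= t < 1 -> periodic F (grid q k t) ->
     exists xy, In xy l /\ fst xy <= grid q k t < snd xy).
Proof.
  enough (Hcells : forall n, exists l : list (R * R),
    (forall xy, In xy l -> max_per_interval F (fst xy) (snd xy)) /\
    (forall k t, (k < n)%nat -> (k < q)%nat -> 0 <= t < 1 -> periodic F (grid q k t) ->
       exists xy, In xy l /\ fst xy <= grid q k t < snd xy)).
  { destruct (Hcells q) as [l [Hmax Hcov]]. exists l. split; [exact Hmax|].
    intros k t Hk. now apply Hcov. }
  induction n as [|n [l [Hmax Hcov]]].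
  - exists nil. split; intros; [contradiction|lia].
  - destruct (classic (exists p, cell_period n p)) as [[p Hp]|Hnone].
    + destruct (maximal_block (fun i => cell_period i p) q n (proj1 Hp) Hp)
        as [a [b [Hab [Hbq [Hall [Ha_end Hb_end]]]]]].
      exists ((grid q a 0, grid q b 0) :: l). split.
      * intros xy [<-|Hin]; [apply (max_per_interval_cells a b p); auto; lia|auto].
      * intros k t Hk Hkq Ht Hper. destruct (Nat.eq_dec k n) as [->|Hne].
        -- exists (grid q a 0, grid q b 0). split; [now left|]. simpl.
           assert (INR a <= INR n) by (apply le_INR; lia).
           assert (INR n + 1 <= INR b) by (rewrite <- S_INR; apply le_INR; lia).
           split; [apply grid_le_iff|apply grid_lt_iff]; auto; lra.
        -- destruct (Hcov k t ltac:(lia) Hkq Ht Hper) as [xy [Hin Hxy]].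
           exists xy. split; [now right|exact Hxy].
    + exists l. split; [exact Hmax|]. intros k t Hk Hkq Ht Hper.
      destruct (Nat.eq_dec k n) as [->|Hne]; [|apply Hcov; auto; lia].
      exfalso. apply Hnone. destruct (least_period_exists F _ Hper) as [p Hlp].
      exists p. now apply (cell_period_of n t).
Qed.

Lemma periodic_set_max_intervals : exists l : list (R * R),
  (forall xy, In xy l -> max_per_interval F (fst xy) (snd xy)) /\
  (forall z, I_per F z <-> exists xy, In xy l /\ fst xy <= z < snd xy).
Proof.
  destruct periodic_cells_covered as [l [Hmax Hcov]].
  exists l. split; [exact Hmax|]. intros z. split.
  - intros Hz. destruct (grid_decomp q q_pos z (proj1 Hz)) as [k [t [Hk [Ht ->]]]].
    now apply Hcov.
  - intros [xy [Hin Hz]]. exact (max_per_interval_periodic F _ _ z (Hmax xy Hin) Hz).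
Qed.

Lemma least_period_le_q x p : in_I x -> least_period F x p -> (p <= q)%nat.
Proof.
  intros Hx Hlp. destruct (grid_decomp q q_pos x Hx) as [k [t [Hk [Ht ->]]]].
  assert (Hper : periodic F (grid q k t)).
  { destruct Hlp as [Hp [Ep _]]. split; [exact Hx|]. now exists p. }
  destruct (iter_returns next_cell q next_cell_lt next_cell_inj k Hk) as [p0 [Hp0 Ep0]].
  enough (p <= p0)%nat by lia.
  apply (least_period_le F _ _ _ Hlp); [lia|]. now rewrite periodic_grid_iterF, Ep0.
Qed.

Lemma zero_not_periodic : ~ periodic F 0.
Proof.
  intros [_ [p [Hp Ep]]]. unfold iterF in Ep.
  replace p with (S (p - 1)) in Ep by lia. rewrite Nat.iter_succ in Ep.
  assert (H0 : in_I 0) by (unfold in_I; lra).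
  pose proof (F_range _ (iterF_in_I F F_in_I (p - 1) 0 H0)). unfold iterF in *. lra.
Qed.

Lemma nonperiodic_F x : I_np F x -> I_np F (F x).
Proof.
  intros [Hx Hnp]. split; [now apply F_in_I|].
  intros Hper. apply Hnp. apply (periodic_of_F F F_in_I F_inj); assumption.
Qed.

Lemma nonperiodic_preimage y : I_np F y -> y <> 0 -> exists! x, I_np F x /\ F x = y.
Proof.
  intros [Hy Hnp] Hy0.
  destruct (F_surj y) as [x [Hx <-]]; [destruct Hy; split; [lra|assumption]|].
  exists x. split; [split; [split; [exact Hx|]|reflexivity]|].
  - intros Hper. apply Hnp. now apply periodic_F; [apply F_in_I|].
  - intros x' [[Hx' _] E]. now apply F_inj.
Qed.

Lemma nonperiodic_hits_last k t : (k < q)%nat -> 0 <= t < 1 -> ~ periodic F (grid q k t) ->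
  exists m, sent_to_last (Nat.iter m next_cell k).
Proof.
  intros Hk Ht Hnp. apply NNPP. intros Hnone. apply Hnp, periodic_grid_iff; auto.
  intros m Hm. apply Hnone. now exists m.
Qed.

(* Every non-periodic orbit enters cell 0, where F acts through its first return map a;
   cell 0 in turn reaches every non-periodic cell, and a has dense orbits. *)
Lemma nonperiodic_orbit_dense x z eps : I_np F x -> I_np F z -> 0 < eps ->
  exists n, Rabs (iterF F n x - z) < eps.
Proof.
  intros [Hx Hxnp] [Hz Hznp] Heps.
  destruct (grid_decomp q q_pos x Hx) as [k [t [Hk [Ht ->]]]].
  destruct (grid_decomp q q_pos z Hz) as [k' [t' [Hk' [Ht' ->]]]].
  destruct (least_witness _ (nonperiodic_hits_last k t Hk Ht Hxnp)) as [m [Hlast Havoid]].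
  pose proof (iter_F_grid_last m k t Hk Ht Havoid Hlast) as Ex.
  destruct (nonperiodic_hits_last k' t' Hk' Ht' Hznp) as [m' Hlast'].
  destruct (iter_reverse next_cell q next_cell_lt next_cell_inj (S m') k' Hk') as [J EJ].
  rewrite Nat.iter_succ, next_cell_last in EJ by auto using iter_next_cell_lt.
  destruct first_return_zero as [L [HL [EL [Hpath Hreturn]]]].
  assert (Ej : Nat.iter (J mod L) next_cell 0%nat = k') by (rewrite iter_fixed_mod; auto; lia).
  assert (Hu : 0 <= vnk t < 1) by (pose proof (vnk_range t Ht); lra).
  destruct (vnk_orbit_dense (vnk t) t' eps Hu Ht' Heps) as [n Hn].
  exists (J mod L + (n * L + S m))%nat. unfold iterF.
  rewrite !Nat.iter_add, Ex, Hreturn, Hpath, Ej by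
    (apply Nat.mod_upper_bound; lia) || (apply iter_vnk_range; exact Hu) || exact Hu.
  eapply Rle_lt_trans; [apply grid_dist; exact q_pos|exact Hn].
Qed.

End RotatedOdometer.

Theorem theorem1p6 (N : nat) (pi : nat -> nat) :
  (1 <= N)%nat -> is_perm (2 ^ N) pi ->
  let F := Fpi N pi in
  (* (i) *)
  ((forall x, I_per F x -> periodic F x) /\
   (forall x, I_per F x -> I_per F (F x)) /\
   (forall y, I_per F y -> exists! x, I_per F x /\ F x = y)) /\
  (* (ii) *)
  ((exists x, I_per F x) ->
     exists l : list (R * R),
       (forall xy, In xy l -> max_per_interval F (fst xy) (snd xy)) /\
       (forall z, I_per F z <-> exists xy, In xy l /\ fst xy <= z < snd xy)) /\
  (exists M : nat, forall x p, in_I x -> least_period F x p -> (p <= M)%nat) /\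
  (* (iii) *)
  (I_np F 0 /\
   (forall x, I_np F x -> I_np F (F x)) /\
   (forall y, I_np F y -> y <> 0 -> exists! x, I_np F x /\ F x = y)) /\
  (* (iv) minimality: every forward orbit in I_np is dense in I_np *)
  (forall x z eps, I_np F x -> I_np F z -> 0 < eps ->
     exists n : nat, Rabs (iterF F n x - z) < eps).
Proof.
  intros _ Hpi. cbv zeta.
  split; [|split; [|split; [|split]]].
  - split; [|split].
    + intros x Hx. exact Hx.
    + apply periodic_F, F_in_I, Hpi.
    + apply periodic_preimage; [apply F_in_I, Hpi|apply F_inj, Hpi].
  - intros _. apply periodic_set_max_intervals, Hpi.
  - exists (2 ^ N)%nat. apply least_period_le_q, Hpi.
  - split; [|split].
    + split; [unfold in_I; lra|apply zero_not_periodic, Hpi].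
    + apply nonperiodic_F, Hpi.
    + apply nonperiodic_preimage, Hpi.
  - apply nonperiodic_orbit_dense, Hpi.
Qed.
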